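(* In the setting described in the context, one has identically on $M$: $$\overline{\mathcal K}(H_0)=-2\,\overline{\mathcal L}_1(\bar k)\,H_0 .$$
   Context: Let $M\subset\mathbb C^3$ be a real-analytic real hypersurface, considered locally near a point, represented in holomorphic coordinates $(z_1,z_2,w)$, $w=u+iv$, as a graph $u=F(z_1,z_2,\bar z_1,\bar z_2,v)$; $(z_1,z_2,\bar z_1,\bar z_2,v)$ are coordinates on $M$. Bars denote complex conjugation. Put $A^j:=-iF_{z_j}/(1+iF_v)$ ($j=1,2$), $\mathcal L_j:=\partial_{z_j}+A^j\partial_v$, with conjugates $\overline{\mathcal L}_j$. Let $\ell:=i(\mathcal L_1(\overline{A^1})-\overline{\mathcal L}_1(A^1))$, assumed nowhere zero. Assume the Levi form of $M$ has constant rank $1$, let $k:=-(\mathcal L_2(\overline{A^1})-\overline{\mathcal L}_1(A^2))/(\mathcal L_1(\overline{A^1})-\overline{\mathcal L}_1(A^1))$, $\mathcal K:=k\mathcal L_1+\mathcal L_2$, $\overline{\mathcal K}=\bar k\overline{\mathcal L}_1+\overline{\mathcal L}_2$. Assume 2-nondegeneracy: $\overline{\mathcal L}_1(k)$ vanishes nowhere. Let $P:=(\ell_{z_1}+A^1\ell_v-\ell A^1_v)/\ell$ and $$H_0:=-\tfrac16\tfrac{\overline{\mathcal L}_1(\overline{\mathcal L}_1(\overline{\mathcal L}_1(k)))}{\overline{\mathcal L}_1(k)}+\tfrac29\tfrac{\overline{\mathcal L}_1(\overline{\mathcal L}_1(k))^2}{\overline{\mathcal L}_1(k)^2}+\tfrac1{18}\tfrac{\overline{\mathcal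 L}_1(\overline{\mathcal L}_1(k))\,\overline P}{\overline{\mathcal L}_1(k)}+\tfrac16\overline{\mathcal L}_1(\overline P)-\tfrac19\overline P^{\,2}.$$ *)

From Stdlib Require Import Reals List.
From Coquelicot Require Import Coquelicot.
Open Scope R_scope.

(** Points of M in the coordinates (z1, z2, zbar1, zbar2, v), written with
    real coordinates z1 = x1 + i y1, z2 = x2 + i y2, and v. *)
Record pt := mkpt { px1 : R; py1 : R; px2 : R; py2 : R; pv : R }.

Definition coord (i : nat) (p : pt) : R :=
  match i with 0%nat => px1 p | 1%nat => py1 p | 2%nat => px2 p
             | 3%nat => py2 p | _ => pv p end.

Definition upd (i : nat) (p : pt) (t : R) : pt :=
  match i with
  | 0%nat => mkpt t (py1 p) (px2 p) (py2 p) (pv p)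
  | 1%nat => mkpt (px1 p) t (px2 p) (py2 p) (pv p)
  | 2%nat => mkpt (px1 p) (py1 p) t (py2 p) (pv p)
  | 3%nat => mkpt (px1 p) (py1 p) (px2 p) t (pv p)
  | _ => mkpt (px1 p) (py1 p) (px2 p) (py2 p) t
  end.

Definition dist_pt (p q : pt) : R :=
  Rmax (Rabs (px1 p - px1 q)) (Rmax (Rabs (py1 p - py1 q))
   (Rmax (Rabs (px2 p - px2 q)) (Rmax (Rabs (py2 p - py2 q)) (Rabs (pv p - pv q))))).

Definition is_open (U : pt -> Prop) : Prop :=
  forall p, U p -> exists r, 0 < r /\ forall q, dist_pt p q < r -> U q.

Definition pdR (i : nat) (f : pt -> R) : pt -> R :=
  fun p => Derive (fun t => f (upd i p t)) (coord i p).

Fixpoint iter_pdR (ds : list nat) (f : pt -> R) : pt -> R :=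
  match ds with nil => f | i :: ds' => pdR i (iter_pdR ds' f) end.

Definition continuous_at_pt (g : pt -> R) (p : pt) : Prop :=
  forall eps, 0 < eps -> exists del, 0 < del /\
    forall q, dist_pt p q < del -> Rabs (g q - g p) < eps.

(** C^infinity on U: all iterated partial derivatives exist and are continuous
    on U. (Implied by real-analyticity; included for convenience.) *)
Definition smooth_on (f : pt -> R) (U : pt -> Prop) : Prop :=
  forall ds p, U p ->
    continuous_at_pt (iter_pdR ds f) p /\
    forall i, (i < 5)%nat -> ex_derive (fun t => iter_pdR ds f (upd i p t)) (coord i p).

Definition boxsum (N : nat) (g : nat -> nat -> nat -> nat -> nat -> R) : R :=
  sum_f_R0 (fun a => sum_f_R0 (fun b => sum_f_R0 (fun c => sum_f_R0 (fun d =>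
    sum_f_R0 (fun e => g a b c d e) N) N) N) N) N.

Definition real_analytic_on (f : pt -> R) (U : pt -> Prop) : Prop :=
  forall p, U p -> exists r (a : nat -> nat -> nat -> nat -> nat -> R), 0 < r /\
    (exists B, forall N,
        boxsum N (fun i j k l m => Rabs (a i j k l m) * r ^ (i + j + k + l + m)) <= B) /\
    forall q, dist_pt p q < r ->
      Un_cv (fun N => boxsum N (fun i j k l m =>
               a i j k l m * (px1 q - px1 p) ^ i * (py1 q - py1 p) ^ j *
               (px2 q - px2 p) ^ k * (py2 q - py2 p) ^ l * (pv q - pv p) ^ m))
            (f q).

Definition cfun := pt -> C.

Definition pdC (i : nat) (f : cfun) : cfun :=
  fun p => (pdR i (fun q => fst (f q)) p, pdR i (fun q => snd (f q)) p).

Local Open Scope C_scope.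

Definition dz1 (f : cfun) : cfun := fun p => (pdC 0 f p - Ci * pdC 1 f p) / 2.
Definition dz2 (f : cfun) : cfun := fun p => (pdC 2 f p - Ci * pdC 3 f p) / 2.
Definition dzb1 (f : cfun) : cfun := fun p => (pdC 0 f p + Ci * pdC 1 f p) / 2.
Definition dzb2 (f : cfun) : cfun := fun p => (pdC 2 f p + Ci * pdC 3 f p) / 2.
Definition dv (f : cfun) : cfun := pdC 4 f.

Definition cconj (f : cfun) : cfun := fun p => Cconj (f p).

Section Setting.
Variable F : pt -> R.
Definition Fc : cfun := fun p => RtoC (F p).

Definition A1 : cfun := fun p => - Ci * dz1 Fc p / (1 + Ci * dv Fc p).
Definition A2 : cfun := fun p => - Ci * dz2 Fc p / (1 + Ci * dv Fc p).

Definition L1 (g : cfun) : cfun := fun p => dz1 g p + A1 p * dv g p.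
Definition L2 (g : cfun) : cfun := fun p => dz2 g p + A2 p * dv g p.
Definition Lb1 (g : cfun) : cfun := fun p => dzb1 g p + Cconj (A1 p) * dv g p.
Definition Lb2 (g : cfun) : cfun := fun p => dzb2 g p + Cconj (A2 p) * dv g p.

Definition ell : cfun := fun p => Ci * (L1 (cconj A1) p - Lb1 A1 p).

Definition h11 : cfun := ell.
Definition h12 : cfun := fun p => Ci * (L1 (cconj A2) p - Lb2 A1 p).
Definition h21 : cfun := fun p => Ci * (L2 (cconj A1) p - Lb1 A2 p).
Definition h22 : cfun := fun p => Ci * (L2 (cconj A2) p - Lb2 A2 p).

Definition levi_rank1_at (p : pt) : Prop :=
  (h11 p <> 0 \/ h12 p <> 0 \/ h21 p <> 0 \/ h22 p <> 0) /\
  h11 p * h22 p - h12 p * h21 p = 0.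

Definition kk : cfun := fun p =>
  - (L2 (cconj A1) p - Lb1 A2 p) / (L1 (cconj A1) p - Lb1 A1 p).

Definition Kb (g : cfun) : cfun := fun p => Cconj (kk p) * Lb1 g p + Lb2 g p.

Definition PP : cfun := fun p =>
  (dz1 ell p + A1 p * dv ell p - ell p * dv A1 p) / ell p.
Definition Pb : cfun := cconj PP.

Definition Lb1k : cfun := Lb1 kk.
Definition Lb1Lb1k : cfun := Lb1 Lb1k.
Definition Lb1Lb1Lb1k : cfun := Lb1 Lb1Lb1k.

Definition H0 : cfun := fun p =>
  - (1/6) * (Lb1Lb1Lb1k p / Lb1k p)
  + (2/9) * ((Lb1Lb1k p * Lb1Lb1k p) / (Lb1k p * Lb1k p))
  + (1/18) * (Lb1Lb1k p * Pb p / Lb1k p)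
  + (1/6) * Lb1 Pb p
  - (1/9) * (Pb p * Pb p).
End Setting.

From Pilot Require Import Defs.
From Stdlib Require Import Reals Lra Lia FunctionalExtensionality.
From Coquelicot Require Import Coquelicot.
Import Defs.
Open Scope R_scope.

(* The frame L1, L2, Lb1, Lb2 consists of vector fields whose coefficients are constant
   except along d/dv, so all brackets among them are multiples of d/dv: [L1, L2] = 0 because
   L1 and L2 annihilate the function w̄ = F - i v, whose v-derivative F_v - i never vanishes,
   and [L_j, Lb_k] = B_jk d/dv with h_jk = i B_jk.  The Jacobi identity for [L1, L2] = 0 and
   rank one of the Levi matrix show that K = k L1 + L2 multiplies B11 and B12 by the same
   function, so K(k̄) = K(-B12/B11) = 0; the same computation gives
   K(P) = -L1(k) P - L1(L1 k).  Conjugating, with m = Lb1(k̄): Kb(k) = 0, [Kb, Lb1] = -m Lb1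
   and Kb(Pb) = -m Pb - Lb1(m).  Hence each Lb1-derivative of k in H0 is an eigenfunction of
   Kb up to terms in Lb1(m), Lb1(Lb1 m), and these cancel in H0, leaving Kb(H0) = -2 m H0. *)

Lemma coord_upd_same i p t : coord i (upd i p t) = t.
Proof. destruct i as [|[|[|[|[|]]]]]; reflexivity. Qed.

Lemma coord_upd_other i j p t : (i < 5)%nat -> (j < 5)%nat -> i <> j ->
  coord j (upd i p t) = coord j p.
Proof.
  intros Hi Hj Hij.
  destruct i as [|[|[|[|[|i]]]]]; destruct j as [|[|[|[|[|j]]]]]; try lia; reflexivity.
Qed.

Lemma upd_upd_same i p s t : upd i (upd i p s) t = upd i p t.
Proof. destruct i as [|[|[|[|[|]]]]]; reflexivity. Qed.

Lemma upd_upd_other i j p s t : (i < 5)%nat -> (j < 5)%nat -> i <> j ->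
  upd i (upd j p t) s = upd j (upd i p s) t.
Proof.
  intros Hi Hj Hij.
  destruct i as [|[|[|[|[|i]]]]]; destruct j as [|[|[|[|[|j]]]]]; try lia; reflexivity.
Qed.

Lemma upd_coord i p : upd i p (coord i p) = p.
Proof. destruct p; destruct i as [|[|[|[|[|]]]]]; reflexivity. Qed.

Lemma upd_upd_upd i j p s t u : (i < 5)%nat -> (j < 5)%nat -> i <> j ->
  upd i (upd j (upd i p s) t) u = upd j (upd i p u) t.
Proof. intros. rewrite upd_upd_other, upd_upd_same by auto. reflexivity. Qed.

Lemma coord_upd_upd i j p s t : (i < 5)%nat -> (j < 5)%nat -> i <> j ->
  coord i (upd j (upd i p s) t) = s.
Proof. intros. rewrite coord_upd_other by auto. apply coord_upd_same. Qed.

Lemma dist_pt_upd_upd p i j s t r : (i < 5)%nat -> (j < 5)%nat ->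
  Rabs (s - coord i p) < r -> Rabs (t - coord j p) < r ->
  dist_pt p (upd j (upd i p s) t) < r.
Proof.
  intros Hi Hj Hs Ht.
  assert (Hr : 0 < r) by (eapply Rle_lt_trans; [apply Rabs_pos|exact Hs]).
  rewrite Rabs_minus_sym in Hs, Ht.
  assert (H0 : forall x, Rabs (x - x) < r) by (intro x; rewrite Rminus_diag, Rabs_R0; exact Hr).
  unfold dist_pt.
  destruct i as [|[|[|[|[|i]]]]]; destruct j as [|[|[|[|[|j]]]]]; try lia;
    simpl in *; repeat apply Rmax_lub_lt; auto.
Qed.

Lemma dist_pt_upd p i t r : Rabs (t - coord i p) < r -> dist_pt p (upd i p t) < r.
Proof.
  intro Ht.
  assert (Hr : 0 < r) by (eapply Rle_lt_trans; [apply Rabs_pos|exact Ht]).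
  rewrite Rabs_minus_sym in Ht.
  assert (H0 : forall x, Rabs (x - x) < r) by (intro x; rewrite Rminus_diag, Rabs_R0; exact Hr).
  unfold dist_pt; destruct i as [|[|[|[|[|i]]]]]; simpl in *; repeat apply Rmax_lub_lt; auto.
Qed.

(** * Smooth real functions on an open set *)

Definition eq_on {T} (U : pt -> Prop) (f g : pt -> T) : Prop := forall p, U p -> f p = g p.

Lemma continuous_at_pt_comp2 (phi : R -> R -> R) f g p :
  continuous_at_pt f p -> continuous_at_pt g p -> continuity_2d_pt phi (f p) (g p) ->
  continuous_at_pt (fun q => phi (f q) (g q)) p.
Proof.
  intros Hf Hg Hphi eps Heps.
  destruct (Hphi (mkposreal eps Heps)) as [d Hd].
  destruct (Hf d (cond_pos d)) as [d1 [Hd1 H1]]. destruct (Hg d (cond_pos d)) as [d2 [Hd2 H2]].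
  exists (Rmin d1 d2). split; [now apply Rmin_pos|].
  intros q Hq. apply Hd.
  - apply H1. eapply Rlt_le_trans; [exact Hq|apply Rmin_l].
  - apply H2. eapply Rlt_le_trans; [exact Hq|apply Rmin_r].
Qed.

Lemma continuous_at_pt_const c p : continuous_at_pt (fun _ => c) p.
Proof. intros eps Heps. exists 1. split; [lra|]. intros. now rewrite Rminus_diag, Rabs_R0. Qed.

Lemma continuous_at_pt_plus f g p : continuous_at_pt f p -> continuous_at_pt g p ->
  continuous_at_pt (fun q => f q + g q) p.
Proof.
  intros Hf Hg. apply (continuous_at_pt_comp2 Rplus); auto.
  apply continuity_2d_pt_plus; [apply continuity_2d_pt_id1|apply continuity_2d_pt_id2].
Qed.

Lemma continuous_at_pt_mult f g p : continuous_at_pt f p -> continuous_at_pt g p ->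
  continuous_at_pt (fun q => f q * g q) p.
Proof.
  intros Hf Hg. apply (continuous_at_pt_comp2 Rmult); auto.
  apply continuity_2d_pt_mult; [apply continuity_2d_pt_id1|apply continuity_2d_pt_id2].
Qed.

Lemma continuous_at_pt_inv f p : continuous_at_pt f p -> f p <> 0 ->
  continuous_at_pt (fun q => / f q) p.
Proof.
  intros Hf Hfp. apply (continuous_at_pt_comp2 (fun u _ => / u) f f); auto.
  apply continuity_2d_pt_inv; [apply continuity_2d_pt_id1|exact Hfp].
Qed.

Definition partially_derivable (f : pt -> R) i p : Prop :=
  ex_derive (fun t => f (upd i p t)) (coord i p).

Lemma pdR_const i c : pdR i (fun _ => c) = fun _ => 0.
Proof. apply functional_extensionality; intro p. unfold pdR. apply Derive_const. Qed.

Lemma pdR_opp i f : pdR i (fun q => - f q) = fun q => - pdR i f q.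
Proof. apply functional_extensionality; intro p. apply Derive_opp. Qed.

Lemma pdR_plus i f g p : partially_derivable f i p -> partially_derivable g i p ->
  pdR i (fun q => f q + g q) p = pdR i f p + pdR i g p.
Proof. intros Hf Hg. now apply Derive_plus. Qed.

Lemma pdR_mult i f g p : partially_derivable f i p -> partially_derivable g i p ->
  pdR i (fun q => f q * g q) p = pdR i f p * g p + f p * pdR i g p.
Proof. intros Hf Hg. unfold pdR. rewrite Derive_mult by assumption. now rewrite upd_coord. Qed.

Lemma pdR_inv i f p : partially_derivable f i p -> f p <> 0 ->
  pdR i (fun q => / f q) p = - pdR i f p * (/ f p * / f p).
Proof.
  intros Hf Hfp. unfold pdR. rewrite Derive_inv; [|exact Hf|now rewrite upd_coord].
  rewrite upd_coord. field. exact Hfp.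
Qed.

Fixpoint Cn_on (U : pt -> Prop) (n : nat) (f : pt -> R) : Prop :=
  (forall p, U p -> continuous_at_pt f p) /\
  match n with
  | O => True
  | S n => (forall i p, (i < 5)%nat -> U p -> partially_derivable f i p) /\
           (forall i, (i < 5)%nat -> Cn_on U n (pdR i f))
  end.

Definition Cinf_on (U : pt -> Prop) (f : pt -> R) : Prop := forall n, Cn_on U n f.

Section SmoothOn.
Variable U : pt -> Prop.
Hypothesis open_U : is_open U.

Lemma locally_line p i : U p -> locally (coord i p) (fun t => U (upd i p t)).
Proof.
  intro Hp. destruct (open_U p Hp) as [r [Hr HB]].
  exists (mkposreal r Hr). intros t Ht. apply HB, dist_pt_upd, Ht.
Qed.

Lemma pdR_eq_on i (f g : pt -> R) : eq_on U f g -> eq_on U (pdR i f) (pdR i g).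
Proof.
  intros Hfg p Hp. apply Derive_ext_loc.
  eapply filter_imp; [|exact (locally_line p i Hp)]. intros t Ht. apply Hfg, Ht.
Qed.

Lemma ex_derive_line_eq_on i (f g : pt -> R) p : eq_on U f g -> U p ->
  ex_derive (fun t => f (upd i p t)) (coord i p) -> ex_derive (fun t => g (upd i p t)) (coord i p).
Proof.
  intros Hfg Hp. apply ex_derive_ext_loc.
  eapply filter_imp; [|exact (locally_line p i Hp)]. intros t Ht. apply Hfg, Ht.
Qed.

Lemma continuous_at_pt_eq_on (f g : pt -> R) p : eq_on U f g -> U p ->
  continuous_at_pt f p -> continuous_at_pt g p.
Proof.
  intros Hfg Hp Hf eps Heps.
  destruct (Hf eps Heps) as [d [Hd Hq]]. destruct (open_U p Hp) as [r [Hr HB]].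
  exists (Rmin d r). split; [now apply Rmin_pos|].
  intros q Hpq. rewrite <- (Hfg q), <- (Hfg p); auto.
  - apply Hq. eapply Rlt_le_trans; [exact Hpq|apply Rmin_l].
  - apply HB. eapply Rlt_le_trans; [exact Hpq|apply Rmin_r].
Qed.

Lemma Cn_on_continuous n f p : Cn_on U n f -> U p -> continuous_at_pt f p.
Proof. destruct n; intros [H _]; exact (H p). Qed.

Lemma Cn_on_S n f : Cn_on U (S n) f -> Cn_on U n f.
Proof.
  revert f; induction n as [|n IH]; intros f [Hc [Hd Hpd]].
  - split; [exact Hc|exact I].
  - split; [exact Hc|split; [exact Hd|]]. intros i Hi. apply IH, Hpd, Hi.
Qed.

Lemma Cn_on_eq_on n f g : eq_on U f g -> Cn_on U n f -> Cn_on U n g.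
Proof.
  revert f g; induction n as [|n IH]; intros f g Hfg [Hc Hrest].
  - split; [|exact I]. intros p Hp. eapply continuous_at_pt_eq_on; eauto.
  - destruct Hrest as [Hd Hpd]. split; [|split].
    + intros p Hp. eapply continuous_at_pt_eq_on; eauto.
    + intros i p Hi Hp. apply (ex_derive_line_eq_on i f g p Hfg Hp), Hd; auto.
    + intros i Hi. eapply IH; [apply pdR_eq_on; eauto|auto].
Qed.

Lemma Cn_on_const n c : Cn_on U n (fun _ => c).
Proof.
  revert c; induction n as [|n IH]; intro c;
    (split; [intros; apply continuous_at_pt_const|]); [exact I|split].
  - intros i p _ _. apply (ex_derive_const (V := R_NormedModule) c).
  - intros i Hi. rewrite pdR_const. apply IH.
Qed.

Lemma Cn_on_plus n f g : Cn_on U n f -> Cn_on U n g -> Cn_on U n (fun q => f q + g q).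
Proof.
  revert f g; induction n as [|n IH]; intros f g [Hfc Hf] [Hgc Hg];
    (split; [intros; apply continuous_at_pt_plus; auto|]); [exact I|].
  destruct Hf as [Hfd Hfp], Hg as [Hgd Hgp]. split.
  - intros i p Hi Hp. apply (ex_derive_plus (fun t => f (upd i p t))); [apply Hfd|apply Hgd]; auto.
  - intros i Hi. apply Cn_on_eq_on with (fun q => pdR i f q + pdR i g q).
    + intros p Hp. symmetry. apply pdR_plus; auto.
    + apply IH; auto.
Qed.

Lemma Cn_on_mult n f g : Cn_on U n f -> Cn_on U n g -> Cn_on U n (fun q => f q * g q).
Proof.
  revert f g; induction n as [|n IH]; intros f g Hf Hg.
  - split; [|exact I]. intros; apply continuous_at_pt_mult; eapply Cn_on_continuous; eauto.
  - pose proof (Cn_on_S _ _ Hf) as Hf'. pose proof (Cn_on_S _ _ Hg) as Hg'.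
    destruct Hf as [Hfc [Hfd Hfp]], Hg as [Hgc [Hgd Hgp]].
    split; [intros; apply continuous_at_pt_mult; auto|split].
    + intros i p Hi Hp. apply (ex_derive_mult (fun t => f (upd i p t))); [apply Hfd|apply Hgd]; auto.
    + intros i Hi. apply Cn_on_eq_on with (fun q => pdR i f q * g q + f q * pdR i g q).
      * intros p Hp. symmetry. apply pdR_mult; auto.
      * apply Cn_on_plus; apply IH; auto.
Qed.

Lemma Cn_on_inv n f : (forall p, U p -> f p <> 0) -> Cn_on U n f -> Cn_on U n (fun q => / f q).
Proof.
  intro Hnz. revert f Hnz; induction n as [|n IH]; intros f Hnz Hf.
  - split; [|exact I]. intros; apply continuous_at_pt_inv; auto. eapply Cn_on_continuous; eauto.
  - pose proof (Cn_on_S _ _ Hf) as Hf'. destruct Hf as [Hfc [Hfd Hfp]].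
    split; [intros; apply continuous_at_pt_inv; auto|split].
    + intros i p Hi Hp. apply (ex_derive_inv (fun t => f (upd i p t))); [apply Hfd; auto|].
      rewrite upd_coord. auto.
    + intros i Hi. apply Cn_on_eq_on with (fun q => - pdR i f q * (/ f q * / f q)).
      * intros p Hp. symmetry. apply pdR_inv; auto.
      * apply Cn_on_mult; [|apply Cn_on_mult; apply IH; auto].
        apply Cn_on_eq_on with (fun q => (-1) * pdR i f q); [intros q _; ring|].
        apply Cn_on_mult; [apply Cn_on_const|auto].
Qed.

Lemma Cinf_on_const c : Cinf_on U (fun _ => c).
Proof. intro; apply Cn_on_const. Qed.

Lemma Cinf_on_eq_on f g : eq_on U f g -> Cinf_on U f -> Cinf_on U g.
Proof. intros Hfg Hf n. eapply Cn_on_eq_on; eauto. Qed.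

Lemma Cinf_on_plus f g : Cinf_on U f -> Cinf_on U g -> Cinf_on U (fun q => f q + g q).
Proof. intros Hf Hg n. now apply Cn_on_plus. Qed.

Lemma Cinf_on_mult f g : Cinf_on U f -> Cinf_on U g -> Cinf_on U (fun q => f q * g q).
Proof. intros Hf Hg n. now apply Cn_on_mult. Qed.

Lemma Cinf_on_inv f : (forall p, U p -> f p <> 0) -> Cinf_on U f -> Cinf_on U (fun q => / f q).
Proof. intros Hnz Hf n. now apply Cn_on_inv. Qed.

Lemma Cinf_on_opp f : Cinf_on U f -> Cinf_on U (fun q => - f q).
Proof.
  intro Hf. apply Cinf_on_eq_on with (fun q => (-1) * f q); [intros q _; ring|].
  apply Cinf_on_mult; [apply Cinf_on_const|exact Hf].
Qed.

Lemma Cinf_on_pdR i f : (i < 5)%nat -> Cinf_on U f -> Cinf_on U (pdR i f).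
Proof. intros Hi Hf n. destruct (Hf (S n)) as [_ [_ H]]. now apply H. Qed.

Lemma Cinf_on_partially_derivable f i p : Cinf_on U f -> (i < 5)%nat -> U p ->
  partially_derivable f i p.
Proof. intros Hf Hi Hp. destruct (Hf 1%nat) as [_ [H _]]. now apply H. Qed.

(** * Symmetry of second partial derivatives *)

Lemma continuity_2d_pt_upd (G : pt -> R) p i j : (i < 5)%nat -> (j < 5)%nat ->
  continuous_at_pt G p ->
  continuity_2d_pt (fun s t => G (upd j (upd i p s) t)) (coord i p) (coord j p).
Proof.
  intros Hi Hj HG eps. destruct (HG eps (cond_pos eps)) as [d [Hd H]].
  exists (mkposreal d Hd). intros s t Hs Ht.
  rewrite !upd_coord. apply H, dist_pt_upd_upd; auto.
Qed.

Section Schwarz.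
Variables (f : pt -> R) (i j : nat) (p : pt).
Hypotheses (Hi : (i < 5)%nat) (Hj : (j < 5)%nat) (Hij : i <> j).

Let phi s t := f (upd j (upd i p s) t).

Lemma pdR_pdR_as_Derive2 :
  pdR i (pdR j f) p = Derive (fun s => Derive (fun t => phi s t) (coord j p)) (coord i p).
Proof. unfold pdR. apply Derive_ext; intro s. now rewrite coord_upd_other. Qed.

Lemma pdR_pdR_as_Derive2_swap :
  pdR j (pdR i f) p = Derive (fun t => Derive (fun s => phi s t) (coord i p)) (coord j p).
Proof.
  unfold pdR. apply Derive_ext; intro t. rewrite coord_upd_other by auto.
  apply Derive_ext; intro s. unfold phi. now rewrite upd_upd_other.
Qed.

Lemma Derive2_phi_eq s t :
  Derive (fun z => Derive (fun w => phi z w) t) s = pdR i (pdR j f) (upd j (upd i p s) t).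
Proof.
  unfold pdR. rewrite coord_upd_upd by auto.
  apply Derive_ext; intro z. rewrite upd_upd_upd, coord_upd_same by auto.
  apply Derive_ext; intro w. unfold phi. now rewrite upd_upd_same.
Qed.

Lemma Derive2_phi_swap_eq s t :
  Derive (fun z => Derive (fun w => phi w z) s) t = pdR j (pdR i f) (upd j (upd i p s) t).
Proof.
  unfold pdR. rewrite coord_upd_same.
  apply Derive_ext; intro z. rewrite upd_upd_same, coord_upd_upd by auto.
  apply Derive_ext; intro w. unfold phi. now rewrite upd_upd_upd.
Qed.

Lemma Derive_phi_eq_line_i s t z :
  Derive (fun w => phi z w) t = pdR j f (upd i (upd j (upd i p s) t) z).
Proof.
  unfold pdR. rewrite upd_upd_upd, coord_upd_same by auto.
  apply Derive_ext; intro w. unfold phi. now rewrite upd_upd_same.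
Qed.

Lemma Derive_phi_eq_line_j s t z :
  Derive (fun w => phi w z) s = pdR i f (upd j (upd j (upd i p s) t) z).
Proof.
  unfold pdR. rewrite upd_upd_same, coord_upd_upd by auto.
  apply Derive_ext; intro w. unfold phi. now rewrite upd_upd_upd.
Qed.

Lemma pdR_comm_at : Cinf_on U f -> U p -> pdR i (pdR j f) p = pdR j (pdR i f) p.
Proof.
  intros Hf Hp. rewrite pdR_pdR_as_Derive2, pdR_pdR_as_Derive2_swap.
  assert (Hd : forall k l q, (k < 5)%nat -> (l < 5)%nat -> U q ->
            partially_derivable f l q /\ partially_derivable (pdR k f) l q).
  { intros k l q Hk Hl Hq. split; apply Cinf_on_partially_derivable; auto.
    now apply Cinf_on_pdR. }
  assert (Hc : forall k l, (k < 5)%nat -> (l < 5)%nat -> continuous_at_pt (pdR k (pdR l f)) p).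
  { intros k l Hk Hl. apply (Cn_on_continuous 0); [|exact Hp].
    now apply Cinf_on_pdR, Cinf_on_pdR. }
  apply Schwarz.
  - destruct (open_U p Hp) as [r [Hr HB]]. exists (mkposreal r Hr). intros s t Hs Ht.
    assert (Hq : U (upd j (upd i p s) t)) by (apply HB, dist_pt_upd_upd; auto).
    destruct (Hd j i _ Hj Hi Hq) as [Hfi Hfji]. destruct (Hd i j _ Hi Hj Hq) as [Hfj Hfij].
    unfold partially_derivable in Hfi, Hfji, Hfj, Hfij.
    rewrite coord_upd_upd in Hfi, Hfji by auto. rewrite coord_upd_same in Hfj, Hfij.
    repeat split.
    + eapply ex_derive_ext; [|exact Hfi]. intro z. unfold phi. now rewrite upd_upd_upd.
    + eapply ex_derive_ext; [|exact Hfj]. intro z. unfold phi. now rewrite upd_upd_same.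
    + eapply ex_derive_ext; [intro z; symmetry; apply (Derive_phi_eq_line_i s)|exact Hfji].
    + eapply ex_derive_ext; [intro z; symmetry; apply (Derive_phi_eq_line_j s t)|exact Hfij].
  - eapply continuity_2d_pt_ext; [intros s t; symmetry; apply Derive2_phi_eq|].
    now apply continuity_2d_pt_upd, Hc.
  - eapply continuity_2d_pt_ext; [intros s t; symmetry; apply Derive2_phi_swap_eq|].
    now apply continuity_2d_pt_upd, Hc.
Qed.

End Schwarz.

Lemma pdR_comm f i j : (i < 5)%nat -> (j < 5)%nat -> Cinf_on U f ->
  eq_on U (pdR i (pdR j f)) (pdR j (pdR i f)).
Proof.
  intros Hi Hj Hf p Hp. destruct (Nat.eq_dec i j) as [->|Hij]; [reflexivity|].
  now apply pdR_comm_at.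
Qed.

End SmoothOn.

Lemma iter_pdR_pdR ds i f : iter_pdR ds (pdR i f) = iter_pdR (ds ++ i :: nil) f.
Proof. induction ds as [|k ds IH]; simpl; congruence. Qed.

Lemma smooth_on_Cinf_on f U : smooth_on f U -> Cinf_on U f.
Proof.
  intros Hf n. revert f Hf; induction n as [|n IH]; intros f Hf.
  - split; [|exact I]. intros p Hp. apply (Hf nil p Hp).
  - split; [|split].
    + intros p Hp. apply (Hf nil p Hp).
    + intros i p Hi Hp. now apply (Hf nil p Hp).
    + intros i Hi. apply IH. intros ds p Hp. rewrite iter_pdR_pdR. now apply Hf.
Qed.

Lemma pdR_pv_xy i : (i < 4)%nat -> pdR i pv = fun _ => 0.
Proof.
  intro Hi. apply functional_extensionality; intro p. unfold pdR.
  destruct i as [|[|[|[|i]]]]; try lia; simpl; apply Derive_const.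
Qed.

Lemma pdR_pv_v : pdR 4 pv = fun _ => 1.
Proof. apply functional_extensionality; intro p. apply Derive_id. Qed.

Lemma continuous_at_pt_pv p : continuous_at_pt pv p.
Proof.
  intros eps Heps. exists eps. split; [exact Heps|]. intros q Hq.
  eapply Rle_lt_trans; [|exact Hq]. rewrite Rabs_minus_sym. unfold dist_pt.
  repeat (eapply Rle_trans; [|apply Rmax_r]). apply Rle_refl.
Qed.

Lemma Cinf_on_pv U : Cinf_on U pv.
Proof.
  intros [|n]; (split; [intros; apply continuous_at_pt_pv|]); [exact I|split].
  - intros i p Hi _. unfold partially_derivable.
    destruct (Nat.eq_dec i 4) as [->|Hi4]; [simpl; apply ex_derive_id|].
    destruct i as [|[|[|[|i]]]]; try lia; simpl; apply (ex_derive_const (V := R_NormedModule)).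
  - intros i Hi. destruct (Nat.eq_dec i 4) as [->|Hi4].
    + rewrite pdR_pv_v. apply Cn_on_const.
    + rewrite pdR_pv_xy by lia. apply Cn_on_const.
Qed.

(** * Complex-valued functions and vector fields *)

Definition CinfC_on (U : pt -> Prop) (g : cfun) : Prop :=
  Cinf_on U (fun p => fst (g p)) /\ Cinf_on U (fun p => snd (g p)).

Open Scope C_scope.

Section ComplexCalculus.
Variable U : pt -> Prop.
Hypothesis open_U : is_open U.

Lemma CinfC_on_eq_on (g h : cfun) : eq_on U g h -> CinfC_on U g -> CinfC_on U h.
Proof.
  intros Hgh [H1 H2].
  split; [apply Cinf_on_eq_on with (fun p => fst (g p))|apply Cinf_on_eq_on with (fun p => snd (g p))];
    auto; intros p Hp; now rewrite Hgh.
Qed.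

Lemma CinfC_on_const c : CinfC_on U (fun _ => c).
Proof. split; apply Cinf_on_const. Qed.

Lemma CinfC_on_plus (g h : cfun) : CinfC_on U g -> CinfC_on U h -> CinfC_on U (fun p => g p + h p).
Proof. intros [G1 G2] [H1 H2]. split; now apply Cinf_on_plus. Qed.

Lemma CinfC_on_opp (g : cfun) : CinfC_on U g -> CinfC_on U (fun p => - g p).
Proof. intros [G1 G2]. split; now apply Cinf_on_opp. Qed.

Lemma CinfC_on_minus (g h : cfun) : CinfC_on U g -> CinfC_on U h -> CinfC_on U (fun p => g p - h p).
Proof. intros Hg Hh. now apply CinfC_on_plus, CinfC_on_opp. Qed.

Lemma CinfC_on_mult (g h : cfun) : CinfC_on U g -> CinfC_on U h -> CinfC_on U (fun p => g p * h p).
Proof.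
  intros [G1 G2] [H1 H2]. split; simpl; unfold Rminus.
  - apply Cinf_on_plus; [exact open_U| |apply Cinf_on_opp; [exact open_U|]];
      apply Cinf_on_mult; assumption.
  - apply Cinf_on_plus; try apply Cinf_on_mult; assumption.
Qed.

Lemma CinfC_on_conj (g : cfun) : CinfC_on U g -> CinfC_on U (cconj g).
Proof. intros [G1 G2]. split; [exact G1|now apply Cinf_on_opp]. Qed.

Lemma CinfC_on_inv (g : cfun) : (forall p, U p -> g p <> 0) -> CinfC_on U g -> CinfC_on U (fun p => / g p).
Proof.
  intros Hnz [G1 G2].
  assert (Hn : Cinf_on U (fun p => / (fst (g p) * fst (g p) + snd (g p) * snd (g p)))%R).
  { apply Cinf_on_inv; [exact open_U| |apply Cinf_on_plus; try apply Cinf_on_mult; assumption].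
    intros p Hp Habs. apply (Hnz p Hp). destruct (g p) as [a b]. simpl in Habs.
    apply injective_projections; simpl; nra. }
  split.
  - apply Cinf_on_eq_on with (fun p => fst (g p) * / (fst (g p) * fst (g p) + snd (g p) * snd (g p)))%R;
      [exact open_U|intros p _; simpl; unfold Rdiv; f_equal; f_equal; ring|].
    apply Cinf_on_mult; assumption.
  - apply Cinf_on_eq_on with (fun p => - snd (g p) * / (fst (g p) * fst (g p) + snd (g p) * snd (g p)))%R;
      [exact open_U|intros p _; simpl; unfold Rdiv; f_equal; f_equal; ring|].
    apply Cinf_on_mult; try apply Cinf_on_opp; assumption.
Qed.

Lemma CinfC_on_div (g h : cfun) : (forall p, U p -> h p <> 0) -> CinfC_on U g -> CinfC_on U h ->
  CinfC_on U (fun p => g p / h p).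
Proof. intros. apply CinfC_on_mult; auto. now apply CinfC_on_inv. Qed.

Lemma CinfC_on_pdC i (g : cfun) : (i < 5)%nat -> CinfC_on U g -> CinfC_on U (pdC i g).
Proof. intros Hi [G1 G2]. split; now apply Cinf_on_pdR. Qed.

Lemma pdC_eq_on i (g h : cfun) : eq_on U g h -> eq_on U (pdC i g) (pdC i h).
Proof.
  intros Hgh p Hp. unfold pdC.
  f_equal; apply (pdR_eq_on U open_U); try exact Hp; intros q Hq; now rewrite Hgh.
Qed.

Lemma pdC_const i c : pdC i (fun _ => c) = fun _ => 0.
Proof.
  apply functional_extensionality; intro p. unfold pdC. now rewrite !pdR_const.
Qed.

Lemma pdC_conj i (g : cfun) : pdC i (cconj g) = cconj (pdC i g).
Proof.
  apply functional_extensionality; intro p. unfold pdC, cconj, pdR. simpl.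
  now rewrite Derive_opp.
Qed.

Lemma pdC_opp i (g : cfun) : pdC i (fun p => - g p) = fun p => - pdC i g p.
Proof.
  apply functional_extensionality; intro p. unfold pdC, pdR. simpl.
  now rewrite !Derive_opp.
Qed.

Lemma pdC_plus i (g h : cfun) : (i < 5)%nat -> CinfC_on U g -> CinfC_on U h ->
  eq_on U (pdC i (fun p => g p + h p)) (fun p => pdC i g p + pdC i h p).
Proof.
  intros Hi [G1 G2] [H1 H2] p Hp. unfold pdC. simpl.
  rewrite !pdR_plus; auto; now apply (Cinf_on_partially_derivable U).
Qed.

Lemma pdC_minus i (g h : cfun) : (i < 5)%nat -> CinfC_on U g -> CinfC_on U h ->
  eq_on U (pdC i (fun p => g p - h p)) (fun p => pdC i g p - pdC i h p).
Proof.
  intros Hi Hg Hh p Hp. unfold Cminus.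
  rewrite (pdC_plus i g (fun p => - h p)), pdC_opp; auto. now apply CinfC_on_opp.
Qed.

Lemma pdC_mult i (g h : cfun) : (i < 5)%nat -> CinfC_on U g -> CinfC_on U h ->
  eq_on U (pdC i (fun p => g p * h p)) (fun p => pdC i g p * h p + g p * pdC i h p).
Proof.
  intros Hi [G1 G2] [H1 H2] p Hp.
  assert (D : forall f, Cinf_on U f -> partially_derivable f i p)
    by (intros; now apply (Cinf_on_partially_derivable U)).
  unfold pdC. simpl. unfold Rminus.
  rewrite !pdR_plus, pdR_opp, !pdR_mult
    by (apply D; repeat (assumption || apply Cinf_on_mult || apply Cinf_on_opp)).
  apply injective_projections; simpl; ring.
Qed.

Lemma pdC_inv i (g : cfun) : (i < 5)%nat -> (forall p, U p -> g p <> 0) -> CinfC_on U g ->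
  eq_on U (pdC i (fun p => / g p)) (fun p => - pdC i g p * (/ g p * / g p)).
Proof.
  intros Hi Hnz Hg p Hp.
  assert (Hinv : CinfC_on U (fun p => / g p)) by now apply CinfC_on_inv.
  assert (H1 : eq_on U (fun p => g p * / g p) (fun _ => 1))
    by (intros q Hq; field; now apply Hnz).
  pose proof (pdC_eq_on i _ _ H1 p Hp) as E.
  rewrite pdC_const, (pdC_mult i g (fun p => / g p)) in E by assumption.
  assert (Hgp := Hnz p Hp).
  replace (pdC i (fun p => / g p) p) with
    ((pdC i g p * / g p + g p * pdC i (fun p => / g p) p) * / g p - pdC i g p * (/ g p * / g p))
    by (field; exact Hgp).
  rewrite E. ring.
Qed.

Lemma pdC_comm i j (g : cfun) : (i < 5)%nat -> (j < 5)%nat -> CinfC_on U g ->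
  eq_on U (pdC i (pdC j g)) (pdC j (pdC i g)).
Proof.
  intros Hi Hj [G1 G2] p Hp. unfold pdC at 1 3. simpl.
  f_equal; now apply (pdR_comm U open_U).
Qed.

End ComplexCalculus.

Definition vfield := nat -> cfun.

Definition vder (X : vfield) (g : cfun) : cfun := fun p =>
  X 0%nat p * pdC 0 g p + X 1%nat p * pdC 1 g p + X 2%nat p * pdC 2 g p
  + X 3%nat p * pdC 3 g p + X 4%nat p * pdC 4 g p.

Definition CinfV_on (U : pt -> Prop) (X : vfield) : Prop :=
  forall i, (i < 5)%nat -> CinfC_on U (X i).

Definition conj_vfield (X : vfield) : vfield := fun i => cconj (X i).

Definition vbracket (X Y : vfield) : vfield := fun i p => vder X (Y i) p - vder Y (X i) p.

Lemma CinfC_on_vder U X g : is_open U -> CinfV_on U X -> CinfC_on U g -> CinfC_on U (vder X g).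
Proof.
  intros HU HX Hg. unfold vder.
  repeat apply (CinfC_on_plus U HU); apply (CinfC_on_mult U HU);
    solve [apply HX; lia | apply CinfC_on_pdC; auto; lia].
Qed.

Create HintDb smooth discriminated.

Ltac smooth_step :=
  match goal with
  | |- is_open _ => assumption
  | |- (_ < _)%nat => lia
  | |- CinfC_on ?U (fun _ => ?c) => apply (CinfC_on_const U c)
  | |- CinfC_on ?U (fun x => Cplus (@?g x) (@?h x)) => refine (CinfC_on_plus U _ g h _ _)
  | |- CinfC_on ?U (fun x => Cminus (@?g x) (@?h x)) => refine (CinfC_on_minus U _ g h _ _)
  | |- CinfC_on ?U (fun x => Cmult (@?g x) (@?h x)) => refine (CinfC_on_mult U _ g h _ _)
  | |- CinfC_on ?U (fun x => Cdiv (@?g x) (@?h x)) => refine (CinfC_on_div U _ g h _ _ _)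
  | |- CinfC_on ?U (fun x => Copp (@?g x)) => refine (CinfC_on_opp U _ g _)
  | |- CinfC_on ?U (fun x => Cinv (@?g x)) => refine (CinfC_on_inv U _ g _ _)
  | |- CinfC_on ?U (fun x => ?h x) => change (CinfC_on U h)
  | |- CinfC_on ?U (fun x => ?h ?a x) => change (CinfC_on U (h a))
  | |- CinfC_on ?U (cconj ?g) => refine (CinfC_on_conj U _ g _)
  | |- CinfC_on ?U (vder ?X ?g) => refine (CinfC_on_vder U X g _ _ _)
  | |- CinfC_on ?U (pdC ?i ?g) => refine (CinfC_on_pdC U i g _ _)
  | H : CinfV_on ?U ?X |- CinfC_on ?U (?X _) => apply H
  | |- CinfC_on _ _ => solve [assumption | eauto with smooth]
  | |- CinfV_on _ _ => solve [assumption | eauto with smooth]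
  | |- forall p, ?U p -> _ <> _ =>
      let q := fresh in let Hq := fresh in
      intros q Hq; cbv beta; repeat apply Cmult_neq_0; solve [auto with smooth]
  | |- _ => assumption
  end.

Ltac smooth := repeat smooth_step.

Section VectorFields.
Variable U : pt -> Prop.
Hypothesis open_U : is_open U.

Lemma vder_eq_on X (g h : cfun) : eq_on U g h -> eq_on U (vder X g) (vder X h).
Proof. intros Hgh p Hp. unfold vder. now rewrite !(pdC_eq_on U open_U _ g h Hgh p Hp). Qed.

Lemma vder_const X (c : C) : vder X (fun _ => c) = fun _ => 0.
Proof.
  apply functional_extensionality; intro p. unfold vder. rewrite !pdC_const. ring.
Qed.

Lemma vder_zero X (g : cfun) : eq_on U g (fun _ => 0) -> eq_on U (vder X g) (fun _ => 0).
Proof. intros Hg p Hp. now rewrite (vder_eq_on X _ _ Hg p Hp), vder_const. Qed.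

Lemma vder_plus X (g h : cfun) : CinfC_on U g -> CinfC_on U h ->
  eq_on U (vder X (fun p => g p + h p)) (fun p => vder X g p + vder X h p).
Proof. intros Hg Hh p Hp. unfold vder. rewrite !(pdC_plus U) by (auto; lia). ring. Qed.

Lemma vder_opp X (g : cfun) : vder X (fun p => - g p) = fun p => - vder X g p.
Proof.
  apply functional_extensionality; intro p. unfold vder. rewrite !pdC_opp. ring.
Qed.

Lemma vder_minus X (g h : cfun) : CinfC_on U g -> CinfC_on U h ->
  eq_on U (vder X (fun p => g p - h p)) (fun p => vder X g p - vder X h p).
Proof. intros Hg Hh p Hp. unfold vder. rewrite !(pdC_minus U) by (auto; lia). ring. Qed.

Lemma vder_mult X (g h : cfun) : CinfC_on U g -> CinfC_on U h ->
  eq_on U (vder X (fun p => g p * h p)) (fun p => vder X g p * h p + g p * vder X h p).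
Proof. intros Hg Hh p Hp. unfold vder. rewrite !(pdC_mult U) by (auto; lia). ring. Qed.

Lemma vder_inv X (h : cfun) : (forall p, U p -> h p <> 0) -> CinfC_on U h ->
  eq_on U (vder X (fun p => / h p)) (fun p => - vder X h p * (/ h p * / h p)).
Proof. intros Hnz Hh p Hp. unfold vder. rewrite !(pdC_inv U) by (auto; lia). ring. Qed.

Lemma vder_div X (g h : cfun) : (forall p, U p -> h p <> 0) -> CinfC_on U g -> CinfC_on U h ->
  eq_on U (vder X (fun p => g p / h p)) (fun p => (vder X g p * h p - g p * vder X h p) / (h p * h p)).
Proof.
  intros Hnz Hg Hh p Hp. unfold Cdiv.
  assert (Hinv : CinfC_on U (fun p => / h p)) by smooth.
  rewrite (vder_mult X g _ Hg Hinv p Hp), (vder_inv X h Hnz Hh p Hp).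
  field. now apply Hnz.
Qed.

Lemma conj_vder X (g : cfun) : cconj (vder X g) = vder (conj_vfield X) (cconj g).
Proof.
  apply functional_extensionality; intro p. unfold vder, conj_vfield.
  rewrite !pdC_conj. unfold cconj.
  now rewrite !Cplus_conj, !Cmult_conj.
Qed.

Lemma pdC_vder i Y (g : cfun) : (i < 5)%nat -> CinfV_on U Y -> CinfC_on U g ->
  eq_on U (pdC i (vder Y g)) (fun p => vder (fun j => pdC i (Y j)) g p + vder Y (pdC i g) p).
Proof.
  intros Hi HY Hg p Hp. unfold vder at 1.
  rewrite !(pdC_plus U) by smooth. rewrite !(pdC_mult U) by smooth.
  unfold vder. cbv beta.
  rewrite !(pdC_comm U open_U i _ g) by smooth. ring.
Qed.

Lemma vder_vder_comm X Y (g : cfun) : CinfV_on U X -> CinfV_on U Y -> CinfC_on U g ->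
  eq_on U (fun p => vder X (vder Y g) p - vder Y (vder X g) p) (vder (vbracket X Y) g).
Proof.
  intros HX HY Hg p Hp. unfold vder at 1 3.
  rewrite !(pdC_vder _ Y), !(pdC_vder _ X) by smooth.
  unfold vbracket, vder.
  repeat match goal with
  | |- context [pdC ?i (pdC ?j g) p] =>
      assert (j < i)%nat as _ by lia; rewrite (pdC_comm U open_U i j g) by smooth
  end.
  ring.
Qed.

End VectorFields.

Definition xyconst_field (c0 c1 c2 c3 : C) (a : cfun) : vfield := fun i =>
  match i with
  | 0%nat => fun _ => c0 | 1%nat => fun _ => c1 | 2%nat => fun _ => c2 | 3%nat => fun _ => c3
  | _ => a
  end.

Lemma vder_xyconst_field c0 c1 c2 c3 a g p : vder (xyconst_field c0 c1 c2 c3 a) g p =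
  c0 * pdC 0 g p + c1 * pdC 1 g p + c2 * pdC 2 g p + c3 * pdC 3 g p + a p * pdC 4 g p.
Proof. reflexivity. Qed.

Lemma CinfV_on_xyconst_field U c0 c1 c2 c3 a :
  CinfC_on U a -> CinfV_on U (xyconst_field c0 c1 c2 c3 a).
Proof. intros Ha [|[|[|[|i]]]] _; simpl; auto; apply CinfC_on_const. Qed.

Lemma conj_xyconst_field c0 c1 c2 c3 a : conj_vfield (xyconst_field c0 c1 c2 c3 a) =
  xyconst_field (Cconj c0) (Cconj c1) (Cconj c2) (Cconj c3) (cconj a).
Proof. apply functional_extensionality; now intros [|[|[|[|i]]]]. Qed.

Lemma vder_vder_comm_xyconst U c0 c1 c2 c3 a d0 d1 d2 d3 b (g : cfun) : is_open U ->
  CinfC_on U a -> CinfC_on U b -> CinfC_on U g ->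
  let X := xyconst_field c0 c1 c2 c3 a in let Y := xyconst_field d0 d1 d2 d3 b in
  eq_on U (fun p => vder X (vder Y g) p - vder Y (vder X g) p)
          (fun p => (vder X b p - vder Y a p) * pdC 4 g p).
Proof.
  intros HU Ha Hb Hg X Y p Hp.
  rewrite (vder_vder_comm U HU X Y g) by (auto; apply CinfV_on_xyconst_field; auto).
  unfold vbracket, vder at 1. simpl. rewrite !vder_const. ring.
Qed.

Lemma vder_xyconst_pdC_v U c0 c1 c2 c3 a (g : cfun) : is_open U -> CinfC_on U a -> CinfC_on U g ->
  eq_on U (vder (xyconst_field c0 c1 c2 c3 a) (pdC 4 g))
          (fun p => pdC 4 (vder (xyconst_field c0 c1 c2 c3 a) g) p - pdC 4 a p * pdC 4 g p).
Proof.
  intros HU Ha Hg p Hp.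
  rewrite (pdC_vder U HU 4) by (auto; apply CinfV_on_xyconst_field; auto).
  unfold vder at 2. simpl. rewrite !pdC_const. ring.
Qed.

(** * The CR frame *)

Lemma Cconj_half : Cconj (/ 2) = / 2.
Proof. apply injective_projections; simpl; field. Qed.

Lemma Cconj_i_half : Cconj (Ci / 2) = - Ci / 2.
Proof. apply injective_projections; simpl; field. Qed.

Lemma Cconj_0 : Cconj 0 = 0.
Proof. apply injective_projections; simpl; ring. Qed.

Lemma Ci_sqr : Ci * Ci = - 1.
Proof. apply injective_projections; simpl; ring. Qed.

Lemma Cminus_eq0 (a b : C) : a - b = 0 -> a = b.
Proof. intro H. rewrite <- (Cplus_0_r b), <- H. ring. Qed.

Lemma Cmult_eq0_r (x a : C) : a <> 0 -> x * a = 0 -> x = 0.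
Proof. intros Ha H. replace x with (x * a * / a) by (field; exact Ha). rewrite H. ring. Qed.

Lemma Cminus_eq_r (a b c : C) : a - b = c -> a = b + c.
Proof. intro H. rewrite <- H. ring. Qed.

Lemma cconj_involutive (g : cfun) : cconj (cconj g) = g.
Proof. apply functional_extensionality; intro p. apply Cconj_conj. Qed.

Lemma snd_pdC_Fc F i p : snd (pdC i (Fc F) p) = 0%R.
Proof. unfold pdC. simpl. rewrite pdR_const. reflexivity. Qed.

Lemma real_minus_i_neq0 (z : C) : snd z = 0%R -> z - Ci <> 0.
Proof. destruct z as [a b]; simpl; intros -> E. apply (f_equal snd) in E. simpl in E. lra. Qed.

Lemma one_plus_i_real_neq0 (z : C) : snd z = 0%R -> 1 + Ci * z <> 0.
Proof. destruct z as [a b]; simpl; intros -> E. apply (f_equal fst) in E. simpl in E. lra. Qed.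

Lemma one_plus_i_Fv_neq0 F p : 1 + Ci * dv (Fc F) p <> 0.
Proof. apply one_plus_i_real_neq0, snd_pdC_Fc. Qed.

#[local] Hint Resolve one_plus_i_Fv_neq0 : smooth.

Lemma C2_neq0 : (2 : C) <> 0.
Proof. intro E. apply (f_equal fst) in E. simpl in E. lra. Qed.

#[local] Hint Resolve C2_neq0 : smooth.

Section CRFrame.
Variables (U : pt -> Prop) (F : pt -> R).
Hypotheses (open_U : is_open U) (smooth_F : Cinf_on U F).

Definition L1f : vfield := xyconst_field (/ 2) (- Ci / 2) 0 0 (A1 F).
Definition L2f : vfield := xyconst_field 0 0 (/ 2) (- Ci / 2) (A2 F).
Definition Lb1f : vfield := xyconst_field (/ 2) (Ci / 2) 0 0 (cconj (A1 F)).
Definition Lb2f : vfield := xyconst_field 0 0 (/ 2) (Ci / 2) (cconj (A2 F)).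

Lemma L1_vder : L1 F = vder L1f.
Proof.
  apply functional_extensionality; intro g; apply functional_extensionality; intro p.
  unfold L1, dz1, dv, L1f. rewrite vder_xyconst_field. unfold Cdiv. ring.
Qed.

Lemma L2_vder : L2 F = vder L2f.
Proof.
  apply functional_extensionality; intro g; apply functional_extensionality; intro p.
  unfold L2, dz2, dv, L2f. rewrite vder_xyconst_field. unfold Cdiv. ring.
Qed.

Lemma Lb1_vder : Lb1 F = vder Lb1f.
Proof.
  apply functional_extensionality; intro g; apply functional_extensionality; intro p.
  unfold Lb1, dzb1, dv, Lb1f. rewrite vder_xyconst_field. unfold Cdiv, cconj. ring.
Qed.

Lemma Lb2_vder : Lb2 F = vder Lb2f.
Proof.
  apply functional_extensionality; intro g; apply functional_extensionality; intro p.
  unfold Lb2, dzb2, dv, Lb2f. rewrite vder_xyconst_field. unfold Cdiv, cconj. ring.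
Qed.

Lemma conj_L1f : conj_vfield L1f = Lb1f.
Proof.
  unfold L1f, Lb1f. rewrite conj_xyconst_field, Cconj_half, Cconj_0.
  replace (Cconj (- Ci / 2)) with (Ci / 2); [reflexivity|].
  rewrite <- Cconj_i_half, Cconj_conj. reflexivity.
Qed.

Lemma conj_L2f : conj_vfield L2f = Lb2f.
Proof.
  unfold L2f, Lb2f. rewrite conj_xyconst_field, Cconj_half, Cconj_0.
  replace (Cconj (- Ci / 2)) with (Ci / 2); [reflexivity|].
  rewrite <- Cconj_i_half, Cconj_conj. reflexivity.
Qed.

Lemma CinfC_on_Fc : CinfC_on U (Fc F).
Proof. split; [exact smooth_F|exact (Cinf_on_const U 0%R)]. Qed.

#[local] Hint Resolve CinfC_on_Fc : smooth.

Lemma CinfC_on_A1 : CinfC_on U (A1 F).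
Proof. unfold A1, dz1, dv. smooth. Qed.

Lemma CinfC_on_A2 : CinfC_on U (A2 F).
Proof. unfold A2, dz2, dv. smooth. Qed.

#[local] Hint Resolve CinfC_on_A1 CinfC_on_A2 : smooth.

Lemma CinfV_on_L1f : CinfV_on U L1f.
Proof. apply CinfV_on_xyconst_field. smooth. Qed.
Lemma CinfV_on_L2f : CinfV_on U L2f.
Proof. apply CinfV_on_xyconst_field. smooth. Qed.
Lemma CinfV_on_Lb1f : CinfV_on U Lb1f.
Proof. apply CinfV_on_xyconst_field. smooth. Qed.
Lemma CinfV_on_Lb2f : CinfV_on U Lb2f.
Proof. apply CinfV_on_xyconst_field. smooth. Qed.

#[local] Hint Resolve CinfV_on_L1f CinfV_on_L2f CinfV_on_Lb1f CinfV_on_Lb2f : smooth.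

(* The restriction to M of the antiholomorphic coordinate w̄ = u - i v. *)
Definition wbar : cfun := fun p => (F p, - pv p)%R.

Lemma CinfC_on_wbar : CinfC_on U wbar.
Proof. split; [exact smooth_F|apply Cinf_on_opp; [exact open_U|apply Cinf_on_pv]]. Qed.

Lemma pdC_wbar_xy i : (i < 4)%nat -> pdC i wbar = pdC i (Fc F).
Proof.
  intro Hi. apply functional_extensionality; intro p. unfold pdC, wbar. simpl.
  rewrite pdR_opp, pdR_pv_xy, pdR_const by exact Hi. f_equal. apply Ropp_0.
Qed.

Lemma pdC_wbar_v : pdC 4 wbar = fun p => pdC 4 (Fc F) p - Ci.
Proof.
  apply functional_extensionality; intro p. unfold pdC, wbar. simpl.
  rewrite pdR_opp, pdR_pv_v, pdR_const. apply injective_projections; simpl; ring.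
Qed.

Lemma coefficient_A_annihilates_wbar (D : C) p :
  D + (- Ci * D / (1 + Ci * dv (Fc F) p)) * (pdC 4 (Fc F) p - Ci) = 0.
Proof.
  pose proof (one_plus_i_Fv_neq0 F p) as Hd. unfold dv in *.
  set (Y := 1 + Ci * pdC 4 (Fc F) p) in *.
  assert (HY : Y * / Y = 1) by (apply Cinv_r; exact Hd).
  replace (pdC 4 (Fc F) p - Ci) with (- Ci * Y) by (unfold Y; ring [Ci_sqr]).
  unfold Cdiv. ring [Ci_sqr HY].
Qed.

Lemma vder_L1f_wbar : vder L1f wbar = fun _ => 0.
Proof.
  apply functional_extensionality; intro p. unfold L1f. rewrite vder_xyconst_field.
  rewrite !pdC_wbar_xy, pdC_wbar_v by lia.
  transitivity (dz1 (Fc F) p + A1 F p * (pdC 4 (Fc F) p - Ci)).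
  - unfold dz1. unfold Cdiv. ring.
  - apply coefficient_A_annihilates_wbar.
Qed.

Lemma vder_L2f_wbar : vder L2f wbar = fun _ => 0.
Proof.
  apply functional_extensionality; intro p. unfold L2f. rewrite vder_xyconst_field.
  rewrite !pdC_wbar_xy, pdC_wbar_v by lia.
  transitivity (dz2 (Fc F) p + A2 F p * (pdC 4 (Fc F) p - Ci)).
  - unfold dz2. unfold Cdiv. ring.
  - apply coefficient_A_annihilates_wbar.
Qed.

Lemma L1_A2_eq_L2_A1 : eq_on U (vder L1f (A2 F)) (vder L2f (A1 F)).
Proof.
  intros p Hp.
  pose proof (vder_vder_comm_xyconst U (/ 2) (- Ci / 2) 0 0 (A1 F) 0 0 (/ 2) (- Ci / 2) (A2 F)
                wbar open_U CinfC_on_A1 CinfC_on_A2 CinfC_on_wbar p Hp) as E.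
  fold L1f L2f in E. cbv beta in E.
  rewrite vder_L1f_wbar, vder_L2f_wbar, !vder_const, pdC_wbar_v in E.
  apply Cminus_eq0, (Cmult_eq0_r _ (pdC 4 (Fc F) p - Ci)).
  - apply real_minus_i_neq0, snd_pdC_Fc.
  - rewrite <- E. ring.
Qed.

#[local] Hint Resolve CinfC_on_wbar : smooth.

Lemma L1_L2_comm g : CinfC_on U g -> eq_on U (vder L1f (vder L2f g)) (vder L2f (vder L1f g)).
Proof.
  intros Hg p Hp.
  pose proof (vder_vder_comm_xyconst U (/ 2) (- Ci / 2) 0 0 (A1 F) 0 0 (/ 2) (- Ci / 2) (A2 F)
                g open_U CinfC_on_A1 CinfC_on_A2 Hg p Hp) as E.
  fold L1f L2f in E. cbv beta in E. rewrite (Cminus_eq_r _ _ _ E), (L1_A2_eq_L2_A1 p Hp). ring.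
Qed.

Lemma L2_A1v_eq_L1_A2v : eq_on U (vder L2f (pdC 4 (A1 F))) (vder L1f (pdC 4 (A2 F))).
Proof.
  intros p Hp. unfold L1f, L2f.
  rewrite !(vder_xyconst_pdC_v U) by smooth. fold L1f L2f.
  rewrite (pdC_eq_on U open_U 4 _ _ L1_A2_eq_L2_A1 p Hp). ring.
Qed.

(* The Jacobi identity for L1, L2 and Y, using [L1, L2] = 0. *)
Lemma L2_jacobi d0 d1 d2 d3 b : CinfC_on U b ->
  let Y := xyconst_field d0 d1 d2 d3 b in
  let B1 p := vder L1f b p - vder Y (A1 F) p in
  let B2 p := vder L2f b p - vder Y (A2 F) p in
  eq_on U (vder L2f B1) (fun p => vder L1f B2 p - B2 p * pdC 4 (A1 F) p + B1 p * pdC 4 (A2 F) p).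
Proof.
  intros Hb Y B1 B2 p Hp. unfold B1, B2.
  assert (HY : CinfV_on U Y) by (apply CinfV_on_xyconst_field; exact Hb).
  rewrite (vder_minus U open_U L2f), (vder_minus U open_U L1f) by smooth.
  pose proof (vder_vder_comm_xyconst U 0 0 (/ 2) (- Ci / 2) (A2 F) d0 d1 d2 d3 b
                (A1 F) open_U CinfC_on_A2 Hb CinfC_on_A1 p Hp) as E2.
  pose proof (vder_vder_comm_xyconst U (/ 2) (- Ci / 2) 0 0 (A1 F) d0 d1 d2 d3 b
                (A2 F) open_U CinfC_on_A1 Hb CinfC_on_A2 p Hp) as E1.
  fold L1f L2f Y in E1, E2. cbv beta in E1, E2.
  rewrite (Cminus_eq_r _ _ _ E1), (Cminus_eq_r _ _ _ E2), (L1_L2_comm b Hb p Hp).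
  rewrite (vder_eq_on U open_U Y _ _ L1_A2_eq_L2_A1 p Hp). ring.
Qed.

Lemma conj_vfield_involutive X : conj_vfield (conj_vfield X) = X.
Proof.
  apply functional_extensionality; intro i. unfold conj_vfield. apply cconj_involutive.
Qed.

Lemma conj_Lb1f : conj_vfield Lb1f = L1f.
Proof. now rewrite <- conj_L1f, conj_vfield_involutive. Qed.

Lemma Cconj_vder X g p : Cconj (vder X g p) = vder (conj_vfield X) (cconj g) p.
Proof. change (Cconj (vder X g p)) with (cconj (vder X g) p). now rewrite conj_vder. Qed.

(* [L_j, Lb_k] = B_jk d/dv, and the Levi form is h_jk = i B_jk. *)
Definition B11 : cfun := fun p => vder L1f (cconj (A1 F)) p - vder Lb1f (A1 F) p.
Definition B12 : cfun := fun p => vder L1f (cconj (A2 F)) p - vder Lb2f (A1 F) p.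
Definition B21 : cfun := fun p => vder L2f (cconj (A1 F)) p - vder Lb1f (A2 F) p.
Definition B22 : cfun := fun p => vder L2f (cconj (A2 F)) p - vder Lb2f (A2 F) p.

Lemma CinfC_on_B11 : CinfC_on U B11.
Proof. unfold B11. smooth. Qed.
Lemma CinfC_on_B12 : CinfC_on U B12.
Proof. unfold B12. smooth. Qed.
Lemma CinfC_on_B21 : CinfC_on U B21.
Proof. unfold B21. smooth. Qed.
Lemma CinfC_on_B22 : CinfC_on U B22.
Proof. unfold B22. smooth. Qed.

#[local] Hint Resolve CinfC_on_B11 CinfC_on_B12 CinfC_on_B21 CinfC_on_B22 : smooth.

Lemma Cconj_B11 p : Cconj (B11 p) = - B11 p.
Proof.
  unfold B11. rewrite Cminus_conj, !Cconj_vder, conj_L1f, conj_Lb1f, cconj_involutive. ring.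
Qed.

Lemma Cconj_B21 p : Cconj (B21 p) = - B12 p.
Proof.
  unfold B21, B12. rewrite Cminus_conj, !Cconj_vder, conj_L2f, conj_Lb1f, cconj_involutive. ring.
Qed.

Lemma ell_eq : ell F = fun p => Ci * B11 p.
Proof. unfold ell. now rewrite L1_vder, Lb1_vder. Qed.

Lemma kk_eq : kk F = fun p => - B21 p / B11 p.
Proof. unfold kk. now rewrite L1_vder, L2_vder, Lb1_vder. Qed.

Lemma levi_rank1_at_det p : levi_rank1_at F p -> B11 p * B22 p = B12 p * B21 p.
Proof.
  intros [_ Hdet]. unfold h11, h12, h21, h22 in Hdet.
  rewrite ell_eq, L1_vder, L2_vder, Lb1_vder, Lb2_vder in Hdet.
  change (Ci * B11 p * (Ci * B22 p) - Ci * B12 p * (Ci * B21 p) = 0) in Hdet.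
  apply Cminus_eq0.
  transitivity (- (Ci * B11 p * (Ci * B22 p) - Ci * B12 p * (Ci * B21 p))); [ring [Ci_sqr]|].
  rewrite Hdet. ring.
Qed.

(** * Levi form of rank one *)

Section LeviRankOne.
Hypothesis B11_neq0 : forall p, U p -> B11 p <> 0.
Hypothesis levi_det0 : forall p, U p -> B11 p * B22 p = B12 p * B21 p.

#[local] Hint Resolve B11_neq0 : smooth.

Lemma CinfC_on_kk : CinfC_on U (kk F).
Proof. rewrite kk_eq. smooth. Qed.

#[local] Hint Resolve CinfC_on_kk : smooth.

Definition Kf : vfield := fun i p => kk F p * L1f i p + L2f i p.
Definition Kbf : vfield := fun i p => Cconj (kk F p) * Lb1f i p + Lb2f i p.

Lemma vder_Kf g : vder Kf g = fun p => kk F p * vder L1f g p + vder L2f g p.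
Proof. apply functional_extensionality; intro p. unfold vder, Kf. ring. Qed.

Lemma Kb_vder : Kb F = vder Kbf.
Proof.
  apply functional_extensionality; intro g; apply functional_extensionality; intro p.
  unfold Kb. rewrite Lb1_vder, Lb2_vder. unfold vder, Kbf. ring.
Qed.

Lemma conj_Kf : conj_vfield Kf = Kbf.
Proof.
  apply functional_extensionality; intro i; apply functional_extensionality; intro p.
  unfold conj_vfield, cconj, Kf, Kbf. rewrite Cplus_conj, Cmult_conj.
  change (Cconj (L1f i p)) with (conj_vfield L1f i p).
  change (Cconj (L2f i p)) with (conj_vfield L2f i p).
  now rewrite conj_L1f, conj_L2f.
Qed.

Lemma B21_eq : eq_on U B21 (fun p => - kk F p * B11 p).
Proof. intros p Hp. rewrite kk_eq. field. auto. Qed.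

Lemma B22_eq : eq_on U B22 (fun p => - kk F p * B12 p).
Proof.
  intros p Hp. rewrite kk_eq.
  replace (B22 p) with (B11 p * B22 p / B11 p) by (field; auto).
  rewrite levi_det0 by exact Hp. field. auto.
Qed.

Lemma conj_kk_eq : eq_on U (cconj (kk F)) (fun p => - B12 p / B11 p).
Proof.
  intros p Hp. unfold cconj. rewrite kk_eq, Cdiv_conj, Copp_conj, Cconj_B21, Cconj_B11 by auto.
  field. auto.
Qed.

Let Q p := kk F p * pdC 4 (A1 F) p + pdC 4 (A2 F) p - vder L1f (kk F) p.

Lemma K_levi d0 d1 d2 d3 b : CinfC_on U b ->
  let Y := xyconst_field d0 d1 d2 d3 b in
  let B1 p := vder L1f b p - vder Y (A1 F) p in
  let B2 p := vder L2f b p - vder Y (A2 F) p in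
  eq_on U B2 (fun p => - kk F p * B1 p) -> eq_on U (vder Kf B1) (fun p => B1 p * Q p).
Proof.
  intros Hb Y B1 B2 HB2 p Hp.
  assert (HY : CinfV_on U Y) by (apply CinfV_on_xyconst_field; exact Hb).
  assert (HB1 : CinfC_on U B1) by (unfold B1; smooth).
  unfold B1, B2, Y in *.
  rewrite vder_Kf, (L2_jacobi d0 d1 d2 d3 b Hb p Hp).
  rewrite (vder_eq_on U open_U L1f _ _ HB2 p Hp), (vder_mult U open_U L1f) by smooth.
  rewrite vder_opp, (HB2 p Hp). unfold Q. ring.
Qed.

Lemma K_B11 : eq_on U (vder Kf B11) (fun p => B11 p * Q p).
Proof. exact (K_levi (/ 2) (Ci / 2) 0 0 (cconj (A1 F)) ltac:(smooth) B21_eq). Qed.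

Lemma K_B12 : eq_on U (vder Kf B12) (fun p => B12 p * Q p).
Proof. exact (K_levi 0 0 (/ 2) (Ci / 2) (cconj (A2 F)) ltac:(smooth) B22_eq). Qed.

Lemma K_conj_kk : eq_on U (vder Kf (cconj (kk F))) (fun _ => 0).
Proof.
  intros p Hp.
  rewrite (vder_eq_on U open_U Kf _ _ conj_kk_eq p Hp), (vder_div U open_U Kf) by smooth.
  rewrite vder_opp, (K_B11 p Hp), (K_B12 p Hp). field. auto.
Qed.

Lemma K_L1 g : CinfC_on U g ->
  eq_on U (vder Kf (vder L1f g)) (fun p => vder L1f (vder Kf g) p - vder L1f (kk F) p * vder L1f g p).
Proof.
  intros Hg p Hp. rewrite !vder_Kf.
  rewrite (vder_plus U L1f), (vder_mult U open_U L1f) by smooth.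
  rewrite (L1_L2_comm g Hg p Hp). ring.
Qed.

Lemma Ci_neq0 : Ci <> 0.
Proof. intro E. apply (f_equal snd) in E. simpl in E. lra. Qed.

Lemma PP_eq : eq_on U (PP F) (fun p => (vder L1f B11 p - B11 p * pdC 4 (A1 F) p) / B11 p).
Proof.
  intros p Hp. unfold PP.
  change (dz1 (ell F) p + A1 F p * dv (ell F) p) with (L1 F (ell F) p).
  rewrite L1_vder, ell_eq, (vder_mult U open_U L1f (fun _ => Ci) B11), vder_const by smooth.
  unfold dv. pose proof Ci_neq0. field. auto.
Qed.

Lemma CinfC_on_PP : CinfC_on U (PP F).
Proof. apply (CinfC_on_eq_on U open_U _ _ (fun p Hp => eq_sym (PP_eq p Hp))). smooth. Qed.

Lemma CinfC_on_Pb : CinfC_on U (Pb F).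
Proof. apply (CinfC_on_conj U open_U), CinfC_on_PP. Qed.

#[local] Hint Resolve CinfC_on_PP CinfC_on_Pb : smooth.

Lemma K_PP : eq_on U (vder Kf (PP F))
  (fun p => - vder L1f (kk F) p * PP F p - vder L1f (vder L1f (kk F)) p).
Proof.
  intros p Hp.
  assert (HQ : CinfC_on U Q) by (unfold Q; smooth).
  rewrite (vder_eq_on U open_U Kf _ _ PP_eq p Hp), (PP_eq p Hp).
  rewrite (vder_div U open_U Kf), (vder_minus U open_U Kf), (vder_mult U open_U Kf) by smooth.
  rewrite (K_L1 B11 CinfC_on_B11 p Hp), (vder_eq_on U open_U L1f _ _ K_B11 p Hp).
  rewrite (vder_mult U open_U L1f) by smooth. unfold Q at 2.
  rewrite (vder_minus U open_U L1f), (vder_plus U L1f), (vder_mult U open_U L1f) by smooth.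
  rewrite (K_B11 p Hp), (vder_Kf (pdC 4 (A1 F))), (L2_A1v_eq_L1_A2v p Hp).
  unfold Q. field. auto.
Qed.

Let m := vder Lb1f (cconj (kk F)).

Lemma Cconj_L1_kk p : Cconj (vder L1f (kk F) p) = m p.
Proof. now rewrite Cconj_vder, conj_L1f. Qed.

Lemma Kb_kk : eq_on U (vder Kbf (kk F)) (fun _ => 0).
Proof.
  intros p Hp. rewrite <- Cconj_0, <- (K_conj_kk p Hp), Cconj_vder, conj_Kf.
  now rewrite cconj_involutive.
Qed.

Lemma Kb_Lb1 g : CinfC_on U g ->
  eq_on U (vder Kbf (vder Lb1f g)) (fun p => vder Lb1f (vder Kbf g) p - m p * vder Lb1f g p).
Proof.
  intros Hg p Hp.
  pose proof (f_equal Cconj (K_L1 (cconj g) ltac:(smooth) p Hp)) as E.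
  rewrite Cminus_conj, Cmult_conj, Cconj_L1_kk, !Cconj_vder, !conj_vder in E.
  rewrite conj_Kf, conj_L1f, cconj_involutive in E. exact E.
Qed.

Lemma Kb_Pb : eq_on U (vder Kbf (Pb F)) (fun p => - m p * Pb F p - vder Lb1f m p).
Proof.
  intros p Hp. pose proof (f_equal Cconj (K_PP p Hp)) as E.
  rewrite Cminus_conj, Cmult_conj, Copp_conj, Cconj_L1_kk, !Cconj_vder, conj_vder in E.
  rewrite conj_Kf, conj_L1f in E. exact E.
Qed.

Lemma Lb1k_eq : Lb1k F = vder Lb1f (kk F).
Proof. unfold Lb1k. now rewrite Lb1_vder. Qed.

Lemma Lb1Lb1k_eq : Lb1Lb1k F = vder Lb1f (Lb1k F).
Proof. unfold Lb1Lb1k. now rewrite Lb1_vder. Qed.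

Lemma Lb1Lb1Lb1k_eq : Lb1Lb1Lb1k F = vder Lb1f (Lb1Lb1k F).
Proof. unfold Lb1Lb1Lb1k. now rewrite Lb1_vder. Qed.

Lemma CinfC_on_Lb1k : CinfC_on U (Lb1k F).
Proof. rewrite Lb1k_eq. smooth. Qed.
Lemma CinfC_on_Lb1Lb1k : CinfC_on U (Lb1Lb1k F).
Proof. rewrite Lb1Lb1k_eq. smooth. apply CinfC_on_Lb1k. Qed.
Lemma CinfC_on_Lb1Lb1Lb1k : CinfC_on U (Lb1Lb1Lb1k F).
Proof. rewrite Lb1Lb1Lb1k_eq. smooth. apply CinfC_on_Lb1Lb1k. Qed.
Lemma CinfC_on_m : CinfC_on U m.
Proof. unfold m. smooth. Qed.

#[local] Hint Resolve CinfC_on_Lb1k CinfC_on_Lb1Lb1k CinfC_on_Lb1Lb1Lb1k CinfC_on_m : smooth.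

Lemma Kb_Lb1k : eq_on U (vder Kbf (Lb1k F)) (fun p => - m p * Lb1k F p).
Proof.
  intros p Hp. rewrite Lb1k_eq, (Kb_Lb1 (kk F)), (vder_zero U open_U Lb1f _ Kb_kk) by smooth.
  ring.
Qed.

Lemma Kb_Lb1Lb1k : eq_on U (vder Kbf (Lb1Lb1k F))
  (fun p => - vder Lb1f m p * Lb1k F p - 2 * m p * Lb1Lb1k F p).
Proof.
  intros p Hp. rewrite Lb1Lb1k_eq, (Kb_Lb1 (Lb1k F)) by smooth.
  rewrite (vder_eq_on U open_U Lb1f _ _ Kb_Lb1k p Hp), (vder_mult U open_U Lb1f) by smooth.
  rewrite vder_opp. ring.
Qed.

Lemma Kb_Lb1Lb1Lb1k : eq_on U (vder Kbf (Lb1Lb1Lb1k F))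
  (fun p => - vder Lb1f (vder Lb1f m) p * Lb1k F p - 3 * vder Lb1f m p * Lb1Lb1k F p
            - 3 * m p * Lb1Lb1Lb1k F p).
Proof.
  intros p Hp. rewrite Lb1Lb1Lb1k_eq, (Kb_Lb1 (Lb1Lb1k F)) by smooth.
  rewrite (vder_eq_on U open_U Lb1f _ _ Kb_Lb1Lb1k p Hp).
  rewrite !(vder_minus U open_U Lb1f), !(vder_mult U open_U Lb1f) by smooth.
  rewrite vder_opp, vder_const, <- Lb1Lb1k_eq. ring.
Qed.

Lemma Kb_Lb1Pb : eq_on U (vder Kbf (vder Lb1f (Pb F)))
  (fun p => - vder Lb1f m p * Pb F p - 2 * m p * vder Lb1f (Pb F) p - vder Lb1f (vder Lb1f m) p).
Proof.
  intros p Hp. rewrite (Kb_Lb1 (Pb F)) by smooth.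
  rewrite (vder_eq_on U open_U Lb1f _ _ Kb_Pb p Hp).
  rewrite (vder_minus U open_U Lb1f), (vder_mult U open_U Lb1f) by smooth.
  rewrite vder_opp. ring.
Qed.

Lemma Kb_H0 : (forall p, U p -> Lb1k F p <> 0) ->
  eq_on U (Kb F (H0 F)) (fun p => (- 2) * Lb1 F (cconj (kk F)) p * H0 F p).
Proof.
  intros Ha p Hp.
  rewrite Kb_vder, Lb1_vder. unfold H0 at 1. rewrite Lb1_vder.
  repeat first [ rewrite (vder_minus U open_U) by smooth | rewrite (vder_plus U) by smooth
               | rewrite (vder_div U open_U) by smooth | rewrite (vder_mult U open_U) by smooth
               | rewrite vder_const ].
  rewrite (Kb_Lb1k p Hp), (Kb_Lb1Lb1k p Hp), (Kb_Lb1Lb1Lb1k p Hp), (Kb_Pb p Hp), (Kb_Lb1Pb p Hp).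
  unfold H0. rewrite Lb1_vder. fold m. field. auto.
Qed.

End LeviRankOne.
End CRFrame.

Theorem lemma8p8 (F : pt -> R) (U : pt -> Prop) :
  is_open U ->
  real_analytic_on F U ->
  smooth_on F U ->
  (forall p, U p -> ell F p <> 0%C) ->
  (forall p, U p -> levi_rank1_at F p) ->
  (forall p, U p -> Lb1k F p <> 0%C) ->
  forall p, U p ->
    Kb F (H0 F) p = ((- 2)%C * Lb1 F (cconj (kk F)) p * H0 F p)%C.
Proof.
  intros open_U _ smooth_F ell_neq0 rank1 Lb1k_neq0.
  apply (Kb_H0 U F open_U (smooth_on_Cinf_on F U smooth_F)); [| |exact Lb1k_neq0].
  - intros p Hp E. apply (ell_neq0 p Hp). rewrite ell_eq, E. apply Cmult_0_r.
  - intros p Hp. apply levi_rank1_at_det, rank1, Hp.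
Qed.
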